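(* Let $\mathcal T=(G,\mathbf T^{(1)},\dots,\mathbf T^{(n)})$ be a tensor network with contraction $\mathbf T\neq 0$. Then its absolute condition number is $\kappa_a(\mathcal T)=\max_{1\le i\le n}\|M_{\mathbf T^{(i)}}\|_2$ and its relative condition number is $\kappa_r(\mathcal T)=\frac{\sum_{i=1}^n\|\mathbf T^{(i)}\|_F}{\|\mathbf T\|_F}\max_{1\le i\le n}\|M_{\mathbf T^{(i)}}\|_2$.
   Context: Tensor network setup: A tensor network $\mathcal T=(G,\mathbf T^{(1)},\dots,\mathbf T^{(n)})$ consists of a multigraph $G$ with vertices $v_1,\dots,v_n$, whose edges are either edges between distinct vertices (contracted legs) or self-loops (uncontracted legs), each edge having a dimension, and tensors $\mathbf T^{(j)}$ at $v_j$ with one mode per incident edge. Its contraction $\mathbf T=\mathscr T_G(\mathbf T^{(1)},\dots,\mathbf T^{(n)})$ is obtained by summing over all contracted-edge indices the product of the entries of all $\mathbf T^{(j)}$; it is a tensor indexed by the uncontracted legs and is multilinear in the $\mathbf T^{(j)}$. The environment matrix $M_{\mathbf T^{(j)}}$ of site $j$ is the matrix of the linear map $X\mapsto\mathrm{vec}(\mathscr T_G(\mathbf T^{(1)},\dots,\mathbf T^{(j-1)},X,\mathbf T^{(j+1)},\dots,\mathbf T^{(n)}))$ acting on $\mathrm{vec}(X)$; thus $\mathrm{vec}(\mathbf T)=M_{\mathbf T^{(j)}}\mathrm{vec}(\mathbf T^{(j)})$. A sitewise perturbation is a tuple $\delta=(\delta^{(i)})_{i=1}^n$ of tensors with $\delta^{(i)}$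 of the same shape as $\mathbf T^{(i)}$; the perturbed tensor is $\hat{\mathbf T}=\mathscr T_G(\mathbf T^{(1)}+\delta^{(1)},\dots,\mathbf T^{(n)}+\delta^{(n)})$, the absolute error is $\mathscr E_a(\mathcal T,\delta)=\|\hat{\mathbf T}-\mathbf T\|_F$ and the relative error is $\mathscr E_r(\mathcal T,\delta)=\|\hat{\mathbf T}-\mathbf T\|_F/\|\mathbf T\|_F$. Here $\|\cdot\|_F$ is the Frobenius norm and $\|\cdot\|_2$ the spectral norm. Condition numbers: with $S_\epsilon=\{\delta:\sum_i\|\delta^{(i)}\|_F\le\epsilon\}$, $\kappa_a(\mathcal T)=\lim_{\epsilon\to0^+}\sup_{\delta\in S_\epsilon}\mathscr E_a(\mathcal T,\delta)/\epsilon$ and $\kappa_r(\mathcal T)=\frac{\sum_i\|\mathbf T^{(i)}\|_F}{\|\mathbf T\|_F}\kappa_a(\mathcal T)$. *)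

From Stdlib Require Import Reals List Arith ClassicalEpsilon.
Import ListNotations.
Open Scope R_scope.

Definition lsum {A} (l : list A) (f : A -> R) : R :=
  fold_right (fun x acc => f x + acc) 0 l.
Definition lprod {A} (l : list A) (f : A -> R) : R :=
  fold_right (fun x acc => f x * acc) 1 l.

Fixpoint all_idx (ds : list nat) : list (list nat) :=
  match ds with
  | [] => [[]]
  | d :: ds' => flat_map (fun i => map (cons i) (all_idx ds')) (seq 0 d)
  end.

(* An edge (u, v, d) joins vertices u and v and has dimension d;
   u <> v : contracted leg, u = v : uncontracted leg (self-loop). *)
Definition edge := (nat * nat * nat)%type.
Record TN := mkTN { nsites : nat; edges : list edge }.

Definition e_src (e : edge) : nat := fst (fst e).
Definition e_dst (e : edge) : nat := snd (fst e).
Definition e_dim (e : edge) : nat := snd e.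

Definition well_formed (G : TN) : Prop :=
  Forall (fun e => (e_src e < nsites G)%nat /\ (e_dst e < nsites G)%nat) (edges G).

Definition edge_at (G : TN) (k : nat) : edge := nth k (edges G) (0%nat, 0%nat, 0%nat).

(* positions (in the edge list) of the edges incident to vertex j,
   in edge-list order: these are the modes of the tensor at j *)
Definition incident (G : TN) (j : nat) : list nat :=
  filter (fun k => orb (Nat.eqb (e_src (edge_at G k)) j) (Nat.eqb (e_dst (edge_at G k)) j))
         (seq 0 (length (edges G))).

Definition open_legs (G : TN) : list nat :=
  filter (fun k => Nat.eqb (e_src (edge_at G k)) (e_dst (edge_at G k)))
         (seq 0 (length (edges G))).

Definition shape (G : TN) (j : nat) : list nat :=
  map (fun k => e_dim (edge_at G k)) (incident G j).
Definition out_shape (G : TN) : list nat :=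
  map (fun k => e_dim (edge_at G k)) (open_legs G).

(* a tensor is a function on multi-indices; only entries at indices of
   the relevant shape matter *)
Definition tensor := list nat -> R.

Definition restrict (pos : list nat) (a : list nat) : list nat :=
  map (fun k => nth k a 0%nat) pos.

Definition contract (G : TN) (Ts : nat -> tensor) : tensor :=
  fun b =>
    lsum (all_idx (map e_dim (edges G))) (fun a =>
      if list_eq_dec Nat.eq_dec (restrict (open_legs G) a) b
      then lprod (seq 0 (nsites G)) (fun j => Ts j (restrict (incident G j) a))
      else 0).

Definition frob (s : list nat) (X : tensor) : R :=
  sqrt (lsum (all_idx s) (fun i => X i ^ 2)).

Definition subst_site (Ts : nat -> tensor) (j : nat) (X : tensor) : nat -> tensor :=
  fun i => if Nat.eqb i j then X else Ts i.

Definition unit_tensor (c : list nat) : tensor :=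
  fun i => if list_eq_dec Nat.eq_dec i c then 1 else 0.

(* Environment matrix of site j: rows indexed by the output multi-indices,
   columns by the multi-indices of T^(j); column c is the contraction with
   the unit tensor e_c at site j, i.e. the matrix of X |-> contraction. *)
Definition env_matrix (G : TN) (Ts : nat -> tensor) (j : nat)
  : list nat -> list nat -> R :=
  fun b c => contract G (subst_site Ts j (unit_tensor c)) b.

Definition Rsup (E : R -> Prop) : R := epsilon (inhabits 0) (is_lub E).

Definition spec_norm (rows cols : list (list nat)) (A : list nat -> list nat -> R) : R :=
  Rsup (fun r => exists x : list nat -> R,
          sqrt (lsum cols (fun c => x c ^ 2)) <= 1 /\
          r = sqrt (lsum rows (fun b => (lsum cols (fun c => A b c * x c)) ^ 2))).

Definition env_norm (G : TN) (Ts : nat -> tensor) (j : nat) : R :=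
  spec_norm (all_idx (out_shape G)) (all_idx (shape G j)) (env_matrix G Ts j).

Definition max_env_norm (G : TN) (Ts : nat -> tensor) : R :=
  fold_right Rmax 0 (map (env_norm G Ts) (seq 0 (nsites G))).

Definition abs_err (G : TN) (Ts delta : nat -> tensor) : R :=
  frob (out_shape G)
       (fun b => contract G (fun i x => Ts i x + delta i x) b - contract G Ts b).

Definition sum_site_norms (G : TN) (Ts : nat -> tensor) : R :=
  lsum (seq 0 (nsites G)) (fun i => frob (shape G i) (Ts i)).

Definition sup_ratio (G : TN) (Ts : nat -> tensor) (eps : R) : R :=
  Rsup (fun r => exists delta : nat -> tensor,
          sum_site_norms G delta <= eps /\ r = abs_err G Ts delta / eps).

Definition is_kappa_a (G : TN) (Ts : nat -> tensor) (k : R) : Prop :=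
  limit1_in (sup_ratio G Ts) (fun eps => 0 < eps) k 0.

Definition kappa_a (G : TN) (Ts : nat -> tensor) : R :=
  epsilon (inhabits 0) (is_kappa_a G Ts).

Definition kappa_r (G : TN) (Ts : nat -> tensor) : R :=
  sum_site_norms G Ts / frob (out_shape G) (contract G Ts) * kappa_a G Ts.

(** The contraction is multilinear in the site tensors. Expanding the product over
    the sites writes the error of a perturbation [delta] as [sum_i M_i vec(delta_i)]
    plus a remainder of order [eps^2] when [sum_i ||delta_i||_F <= eps]; the linear
    part has norm at most [max_i ||M_i||_2 * eps], so the supremum of the error ratio
    over the [eps]-ball is at most [max_i ||M_i||_2 + C eps]. Conversely, perturbing
    only site [i] by [eps x] changes the contraction by exactly [eps M_i x], so for
    every [eps] that supremum is at least [max_i ||M_i||_2]. Squeezing as [eps -> 0]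
    gives [kappa_a]; [kappa_r] is then its definition. *)

From Stdlib Require Import Reals List Arith ClassicalEpsilon.
From Stdlib Require Import Lra Lia Psatz FunctionalExtensionality.
Open Scope R_scope.

Section ListSums.
Context {A : Type}.
Implicit Types (l : list A) (f g : A -> R).

Lemma lsum_cons a l f : lsum (a :: l) f = f a + lsum l f.
Proof. reflexivity. Qed.

Lemma lsum_ext l f g : (forall x, In x l -> f x = g x) -> lsum l f = lsum l g.
Proof. induction l; simpl; intros H; auto. rewrite H, IHl; auto. Qed.

Lemma lprod_ext l f g : (forall x, In x l -> f x = g x) -> lprod l f = lprod l g.
Proof. induction l; simpl; intros H; auto. rewrite H, IHl; auto. Qed.

Lemma lsum_add l f g : lsum l (fun x => f x + g x) = lsum l f + lsum l g.
Proof. induction l; simpl. lra. rewrite IHl; lra. Qed.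

Lemma lsum_sub l f g : lsum l (fun x => f x - g x) = lsum l f - lsum l g.
Proof. induction l; simpl. lra. rewrite IHl; lra. Qed.

Lemma lsum_scal l c f : lsum l (fun x => c * f x) = c * lsum l f.
Proof. induction l; simpl. lra. rewrite IHl; lra. Qed.

Lemma lsum_0 l : lsum l (fun _ => 0) = 0.
Proof. induction l; simpl; auto. rewrite IHl; lra. Qed.

Lemma lsum_le l f g : (forall x, In x l -> f x <= g x) -> lsum l f <= lsum l g.
Proof.
  induction l; simpl; intros H. lra.
  pose proof (H a (or_introl eq_refl)). pose proof (IHl (fun x h => H x (or_intror h))). lra.
Qed.

Lemma lsum_ge0 l f : (forall x, In x l -> 0 <= f x) -> 0 <= lsum l f.
Proof. intros H. rewrite <- (lsum_0 l). apply lsum_le; auto. Qed.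

Lemma lsum_ge_term l f x : (forall y, In y l -> 0 <= f y) -> In x l -> f x <= lsum l f.
Proof.
  induction l; simpl; intros H Hx. destruct Hx.
  destruct Hx as [<-|Hx].
  - pose proof (lsum_ge0 l f (fun y h => H y (or_intror h))). lra.
  - pose proof (H a (or_introl eq_refl)). pose proof (IHl (fun y h => H y (or_intror h)) Hx). lra.
Qed.

Lemma Rabs_lsum_le l f : Rabs (lsum l f) <= lsum l (fun x => Rabs (f x)).
Proof.
  induction l; simpl. rewrite Rabs_R0; lra.
  eapply Rle_trans. apply Rabs_triang. lra.
Qed.

Lemma Rabs_lsum_le_length l f K : (forall x, In x l -> Rabs (f x) <= K) ->
  Rabs (lsum l f) <= INR (length l) * K.
Proof.
  intros H. eapply Rle_trans. apply Rabs_lsum_le.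
  induction l as [|a l IHl]. simpl; lra.
  change (length (a :: l)) with (S (length l)). rewrite S_INR. rewrite lsum_cons. pose proof (H a (or_introl eq_refl)).
  pose proof (IHl (fun y h => H y (or_intror h))). lra.
Qed.

Lemma lsum_single l f y : NoDup l -> In y l -> (forall x, In x l -> x <> y -> f x = 0) ->
  lsum l f = f y.
Proof.
  induction l; simpl; intros Hn Hy H. destruct Hy. inversion Hn; subst.
  destruct Hy as [<-|Hy].
  - rewrite (lsum_ext l f (fun _ => 0)), lsum_0. lra.
    intros x Hx. apply H; auto. intros ->; tauto.
  - rewrite H, IHl; auto. lra. intros ->; tauto.
Qed.

End ListSums.

Lemma lsum_comm {A B} (l1 : list A) (l2 : list B) f :
  lsum l1 (fun x => lsum l2 (fun y => f x y)) = lsum l2 (fun y => lsum l1 (fun x => f x y)).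
Proof. induction l1; simpl. rewrite lsum_0; auto. rewrite IHl1, <- lsum_add. auto. Qed.

Section EuclideanNorm.
Context {A : Type}.
Implicit Types (l : list A) (f g : A -> R).

Definition l2norm l f : R := sqrt (lsum l (fun x => f x ^ 2)).

Lemma lsum_sqr_ge0 l f : 0 <= lsum l (fun x => f x ^ 2).
Proof. apply lsum_ge0; intros; nra. Qed.

Lemma l2norm_ext l f g : (forall x, In x l -> f x = g x) -> l2norm l f = l2norm l g.
Proof. intros H; unfold l2norm; f_equal; apply lsum_ext; intros; rewrite H; auto. Qed.

Lemma l2norm_0 l : l2norm l (fun _ => 0) = 0.
Proof. unfold l2norm. rewrite (lsum_ext l _ (fun _ => 0)), lsum_0, sqrt_0; auto. intros; ring. Qed.

Lemma l2norm_scal l k f : l2norm l (fun x => k * f x) = Rabs k * l2norm l f.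
Proof.
  unfold l2norm. rewrite (lsum_ext l _ (fun x => k ^ 2 * f x ^ 2)) by (intros; ring).
  rewrite lsum_scal, sqrt_mult_alt by nra. f_equal.
  rewrite <- sqrt_Rsqr_abs. unfold Rsqr. f_equal; ring.
Qed.

Lemma Rabs_le_l2norm l f x : In x l -> Rabs (f x) <= l2norm l f.
Proof.
  intros Hx. unfold l2norm. rewrite <- sqrt_Rsqr_abs. apply sqrt_le_1_alt.
  unfold Rsqr. replace (f x * f x) with (f x ^ 2) by ring.
  apply (lsum_ge_term l (fun y => f y ^ 2)); auto. intros; nra.
Qed.

Lemma l2norm_eq0 l f : l2norm l f = 0 -> forall x, In x l -> f x = 0.
Proof.
  intros H x Hx. pose proof (Rabs_le_l2norm l f x Hx) as Hle. rewrite H in Hle.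
  destruct (Req_dec (f x) 0) as [|Hne]; auto.
  pose proof (Rabs_pos_lt _ Hne). lra.
Qed.

Lemma Cauchy_Schwarz l f g :
  lsum l (fun x => f x * g x) ^ 2 <= lsum l (fun x => f x ^ 2) * lsum l (fun x => g x ^ 2).
Proof.
  induction l as [|a l IHl]. simpl; nra. rewrite !lsum_cons.
  set (C := lsum l (fun x => f x * g x)) in *. set (P := lsum l (fun x => f x ^ 2)) in *.
  set (Q := lsum l (fun x => g x ^ 2)) in *.
  assert (0 <= P) by apply lsum_sqr_ge0. assert (0 <= Q) by apply lsum_sqr_ge0.
  set (x := f a) in *. set (y := g a). clearbody C P Q x y.
  enough (2 * x * y * C <= x ^ 2 * Q + y ^ 2 * P) by nra.
  destruct (Req_dec P 0) as [HP|HP].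
  - assert (C = 0) by (rewrite HP in IHl; nra). subst. nra.
  -     assert (0 <= P * (x ^ 2 * Q + y ^ 2 * P - 2 * x * y * C)).
    { replace (P * (x ^ 2 * Q + y ^ 2 * P - 2 * x * y * C))
        with (x ^ 2 * (P * Q - C ^ 2) + (x * C - y * P) ^ 2) by ring.
      apply Rplus_le_le_0_compat; [apply Rmult_le_pos; [apply pow2_ge_0|lra]|apply pow2_ge_0]. }
    assert (0 < P) by lra. nra.
Qed.

Lemma l2norm_add_le l f g : l2norm l (fun x => f x + g x) <= l2norm l f + l2norm l g.
Proof.
  unfold l2norm.
  pose proof (lsum_sqr_ge0 l f) as Hf. pose proof (lsum_sqr_ge0 l g) as Hg.
  pose proof (sqrt_pos (lsum l (fun x => f x ^ 2))). pose proof (sqrt_pos (lsum l (fun x => g x ^ 2))).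
  apply Rsqr_incr_0_var; [|lra].
  rewrite Rsqr_sqrt by apply lsum_sqr_ge0.
  rewrite (lsum_ext l _ (fun x => f x ^ 2 + (2 * (f x * g x) + g x ^ 2))) by (intros; ring).
  rewrite !lsum_add, lsum_scal.
  assert (lsum l (fun x => f x * g x) <=
          sqrt (lsum l (fun x => f x ^ 2)) * sqrt (lsum l (fun x => g x ^ 2))).
  { rewrite <- sqrt_mult_alt by auto.
    destruct (Rle_dec (lsum l (fun x => f x * g x)) 0).
    - pose proof (sqrt_pos (lsum l (fun x => f x ^ 2) * lsum l (fun x => g x ^ 2))). lra.
    - rewrite <- (sqrt_pow2 (lsum l (fun x => f x * g x))) by lra.
      apply sqrt_le_1_alt, Cauchy_Schwarz. }
  pose proof (Rsqr_sqrt _ Hf). pose proof (Rsqr_sqrt _ Hg). unfold Rsqr in *. nra.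
Qed.

Lemma l2norm_le_l1 l f : l2norm l f <= lsum l (fun x => Rabs (f x)).
Proof.
  assert (H1 : 0 <= lsum l (fun x => Rabs (f x))) by (apply lsum_ge0; intros; apply Rabs_pos).
  assert (H2 : lsum l (fun x => f x ^ 2) <= lsum l (fun x => Rabs (f x)) ^ 2).
  { induction l as [|a l IHl]. simpl; nra. rewrite !lsum_cons.
    assert (0 <= lsum l (fun x => Rabs (f x))) by (apply lsum_ge0; intros; apply Rabs_pos).
    pose proof (Rabs_pos (f a)). rewrite <- (pow2_abs (f a)). nra. }
  unfold l2norm. rewrite <- (sqrt_pow2 _ H1). apply sqrt_le_1_alt, H2.
Qed.

End EuclideanNorm.

Lemma l2norm_lsum_le {A B} (L : list A) (I : list B) v :
  l2norm L (fun b => lsum I (fun i => v i b)) <= lsum I (fun i => l2norm L (v i)).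
Proof.
  induction I; simpl.
  - rewrite l2norm_0. lra.
  - eapply Rle_trans. apply (l2norm_add_le L (v a) (fun b => lsum I (fun i => v i b))). lra.
Qed.

Lemma Rsup_is_lub (E : R -> Prop) : bound E -> (exists x, E x) -> is_lub E (Rsup E).
Proof.
  intros Hb He. unfold Rsup. apply epsilon_spec.
  destruct (completeness E Hb He) as [m Hm]. eauto.
Qed.

Definition mx_apply (cols : list (list nat)) (M : list nat -> list nat -> R) (v : tensor) : tensor :=
  fun b => lsum cols (fun c => M b c * v c).

Definition spec_values (rows cols : list (list nat)) (M : list nat -> list nat -> R) (r : R) :=
  exists x : tensor, l2norm cols x <= 1 /\ r = l2norm rows (mx_apply cols M x).

Lemma spec_norm_is_lub rows cols M : is_lub (spec_values rows cols M) (spec_norm rows cols M).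
Proof.
  apply Rsup_is_lub.
  - (* the Frobenius norm of M bounds every value *)
    exists (sqrt (lsum rows (fun b => lsum cols (fun c => M b c ^ 2)))).
    intros r [x [Hx ->]]. apply sqrt_le_1_alt, lsum_le. intros b _.
    eapply Rle_trans. apply Cauchy_Schwarz.
    assert (Hx2 : lsum cols (fun c => x c ^ 2) <= 1).
    { unfold l2norm in Hx. rewrite <- (pow2_sqrt (lsum cols (fun c => x c ^ 2))) by apply lsum_sqr_ge0.
      pose proof (sqrt_pos (lsum cols (fun c => x c ^ 2))). nra. }
    pose proof (lsum_sqr_ge0 cols (fun c => M b c)). nra.
  - exists (l2norm rows (mx_apply cols M (fun _ => 0))), (fun _ => 0).
    rewrite l2norm_0. split; [lra | reflexivity].
Qed.

Lemma spec_norm_mul_le rows cols M v :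
  l2norm rows (mx_apply cols M v) <= spec_norm rows cols M * l2norm cols v.
Proof.
  destruct (Req_dec (l2norm cols v) 0) as [H0|H0].
  - rewrite H0, Rmult_0_r, <- (l2norm_0 rows). right. apply l2norm_ext. intros b _.
    unfold mx_apply. rewrite <- (lsum_0 cols). apply lsum_ext. intros c Hc.
    rewrite (l2norm_eq0 cols v H0 c Hc). ring.
  - set (s := l2norm cols v) in *.
    assert (Hs : 0 < s) by (pose proof (sqrt_pos (lsum cols (fun c => v c ^ 2))); unfold s, l2norm in *; lra).
    set (x := fun c => / s * v c).
    assert (Hx : l2norm cols x = 1).
    { unfold x. rewrite l2norm_scal, Rabs_right. fold s. field. lra.
      left; apply Rinv_0_lt_compat; lra. }
    assert (Hin : spec_values rows cols M (l2norm rows (mx_apply cols M x)))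
      by (exists x; split; [lra | reflexivity]).
    pose proof (proj1 (spec_norm_is_lub rows cols M) _ Hin).
    rewrite (l2norm_ext rows _ (fun b => s * mx_apply cols M x b)).
    + rewrite l2norm_scal, Rabs_right by lra. rewrite Rmult_comm. apply Rmult_le_compat_r; lra.
    + intros b _. unfold mx_apply. rewrite <- lsum_scal. apply lsum_ext. intros c _.
      unfold x. field. lra.
Qed.

Section ListMax.
Context {A : Type}.
Implicit Types (l : list A) (f : A -> R).

Lemma fold_Rmax_le l f S : 0 <= S -> (forall i, In i l -> f i <= S) ->
  fold_right Rmax 0 (map f l) <= S.
Proof. induction l; simpl; intros; auto. apply Rmax_lub; auto. Qed.

Lemma le_fold_Rmax l f i : In i l -> f i <= fold_right Rmax 0 (map f l).
Proof.
  induction l; simpl. intros []. intros [->|H]. apply Rmax_l.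
  eapply Rle_trans. apply IHl; auto. apply Rmax_r.
Qed.

Lemma fold_Rmax_ge0 l f : 0 <= fold_right Rmax 0 (map f l).
Proof. induction l; simpl. lra. eapply Rle_trans. apply IHl. apply Rmax_r. Qed.

End ListMax.

Lemma In_all_idx ds a : In a (all_idx ds) <->
  length a = length ds /\ forall k, (k < length ds)%nat -> (nth k a 0 < nth k ds 0)%nat.
Proof.
  revert a; induction ds as [|d ds IH]; intros a; simpl.
  - split.
    + intros [<-|[]]. split; auto; intros; lia.
    + intros [H _]. destruct a; simpl in H; try lia. auto.
  - rewrite in_flat_map. split.
    + intros [i [Hi Ha]]. apply in_seq in Hi. apply in_map_iff in Ha as [a' [<- Ha']].
      apply IH in Ha' as [H1 H2]. simpl. split. lia. intros [|k] Hk; simpl. lia. apply H2. lia.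
    + intros [H1 H2]. destruct a as [|i a']; simpl in H1. lia.
      exists i. split.
      * apply in_seq. pose proof (H2 0%nat ltac:(lia)). simpl in *. lia.
      * apply in_map, IH. split. lia. intros k Hk. apply (H2 (S k)). lia.
Qed.

Lemma NoDup_all_idx ds : NoDup (all_idx ds).
Proof.
  induction ds as [|d ds IH]; simpl. constructor. simpl; tauto. constructor.
  generalize 0%nat. induction d; intros s; simpl. constructor.
  apply NoDup_app.
  - apply NoDup_map_NoDup_ForallPairs; auto. intros x y _ _ H; inversion H; auto.
  - apply IHd.
  - intros x Hx Hx2. apply in_map_iff in Hx as [x' [<- _]].
    apply in_flat_map in Hx2 as [i [Hi Hx2]]. apply in_seq in Hi.
    apply in_map_iff in Hx2 as [y [Hy _]]. inversion Hy. lia.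
Qed.

Lemma nth_map_lt {X Y} (f : X -> Y) l d d0 k : (k < length l)%nat ->
  nth k (map f l) d = f (nth k l d0).
Proof. intros H. rewrite (nth_indep _ d (f d0)) by (rewrite length_map; auto). apply map_nth. Qed.

Definition edge_indices (G : TN) : list (list nat) := all_idx (map e_dim (edges G)).

Lemma restrict_incident_in G j a : In a (edge_indices G) ->
  In (restrict (incident G j) a) (all_idx (shape G j)).
Proof.
  intros Ha. apply In_all_idx in Ha as [_ Hdim]. rewrite length_map in Hdim.
  apply In_all_idx. unfold restrict, shape. rewrite !length_map. split; auto.
  intros k Hk.
  set (e := nth k (incident G j) 0%nat).
  assert (He : (e < length (edges G))%nat).
  { assert (In e (incident G j)) by (apply nth_In; auto).
    unfold incident in *. apply filter_In in H as [H _]. apply in_seq in H. lia. }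
  rewrite !(nth_map_lt _ _ 0%nat 0%nat) by auto.
  specialize (Hdim e He).
  rewrite (nth_map_lt _ _ 0%nat (0%nat, 0%nat, 0%nat)) in Hdim by auto.
  exact Hdim.
Qed.

Section SiteProducts.
Implicit Types (l : list nat) (t d : nat -> R).

Lemma lprod_update l i v t : NoDup l -> In i l ->
  lprod l (fun j => if Nat.eqb j i then v else t j) =
  v * lprod l (fun j => if Nat.eqb j i then 1 else t j).
Proof.
  induction l as [|x l IH]; intros Hn Hi. destruct Hi. inversion Hn; subst. simpl.
  destruct Hi as [->|Hi].
  - rewrite Nat.eqb_refl, (lprod_ext l _ (fun j => if Nat.eqb j i then 1 else t j)). ring.
    intros y Hy. destruct (Nat.eqb_spec y i); subst; tauto.
  - destruct (Nat.eqb_spec x i). subst; tauto. rewrite IH by auto. ring.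
Qed.

Lemma Rabs_lprod_le l t B : 0 <= B -> (forall j, In j l -> Rabs (t j) <= B) ->
  Rabs (lprod l t) <= B ^ length l.
Proof.
  intros HB; induction l as [|x l IH]; intros H; simpl. rewrite Rabs_R1; lra.
  rewrite Rabs_mult. apply Rmult_le_compat; auto using Rabs_pos.
  - apply H; simpl; auto.
  - apply IH; intros; apply H; simpl; auto.
Qed.

Definition lprod_linear_part l t d : R :=
  lsum l (fun i => lprod l (fun j => if Nat.eqb j i then d j else t j)).

Lemma lprod_linear_part_cons x l t d : ~ In x l ->
  lprod_linear_part (x :: l) t d = d x * lprod l t + t x * lprod_linear_part l t d.
Proof.
  intros Hx. unfold lprod_linear_part. rewrite lsum_cons. simpl. rewrite Nat.eqb_refl.
  rewrite (lprod_ext l _ t), <- lsum_scal.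
  - f_equal. apply lsum_ext. intros i Hi. destruct (Nat.eqb_spec x i); subst; tauto.
  - intros j Hj. destruct (Nat.eqb_spec j x); subst; tauto.
Qed.

Section Perturbation.
Variables (t d : nat -> R) (K e : R).
Hypotheses (HK : 0 <= K) (He : 0 <= e <= 1).

Lemma lprod_perturb_le l :
  (forall j, In j l -> Rabs (t j) <= K) -> (forall j, In j l -> Rabs (d j) <= e) ->
  Rabs (lprod l (fun j => t j + d j) - lprod l t) <= e * INR (length l) * (K + 1) ^ length l.
Proof.
  induction l as [|x l IH]; intros Ht Hd.
  { simpl. rewrite Rminus_diag, Rabs_R0. lra. }
  assert (HP : Rabs (lprod l (fun j => t j + d j)) <= (K + 1) ^ length l).
  { apply Rabs_lprod_le. lra. intros j Hj. eapply Rle_trans. apply Rabs_triang.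
    pose proof (Ht j (or_intror Hj)). pose proof (Hd j (or_intror Hj)). lra. }
  specialize (IH (fun j h => Ht j (or_intror h)) (fun j h => Hd j (or_intror h))).
  pose proof (Ht x (or_introl eq_refl)). pose proof (Hd x (or_introl eq_refl)).
  change (length (x :: l)) with (S (length l)). rewrite S_INR, <- (tech_pow_Rmult (K + 1)). simpl lprod.
  set (P := lprod l (fun j => t j + d j)) in *. set (Q := lprod l t) in *.
  set (m := INR (length l)) in *. set (B := (K + 1) ^ length l) in *.
  assert (0 <= m) by apply pos_INR. assert (0 <= B) by (apply pow_le; lra).
  clearbody P Q m B.
  replace ((t x + d x) * P - t x * Q) with (t x * (P - Q) + d x * P) by ring.
  eapply Rle_trans. apply Rabs_triang. rewrite !Rabs_mult.
  assert (Rabs (t x) * Rabs (P - Q) <= K * (e * m * B)) by (apply Rmult_le_compat; auto using Rabs_pos).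
  assert (Rabs (d x) * Rabs P <= e * B) by (apply Rmult_le_compat; auto using Rabs_pos).
  assert (0 <= e * m * B) by (repeat apply Rmult_le_pos; lra).
  assert (0 <= e * B) by (apply Rmult_le_pos; lra).
  nra.
Qed.

Lemma lprod_perturb_linear_le l : NoDup l ->
  (forall j, In j l -> Rabs (t j) <= K) -> (forall j, In j l -> Rabs (d j) <= e) ->
  Rabs (lprod l (fun j => t j + d j) - lprod l t - lprod_linear_part l t d)
    <= e ^ 2 * INR (length l) ^ 2 * (K + 1) ^ length l.
Proof.
  induction l as [|x l IH]; intros Hn Ht Hd.
  { unfold lprod_linear_part. simpl. replace (1 - 1 - 0) with 0 by ring. rewrite Rabs_R0. lra. }
  inversion Hn; subst.
  pose proof (lprod_perturb_le l (fun j h => Ht j (or_intror h)) (fun j h => Hd j (or_intror h))) as Hfirst.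
  specialize (IH ltac:(auto) (fun j h => Ht j (or_intror h)) (fun j h => Hd j (or_intror h))).
  pose proof (Ht x (or_introl eq_refl)). pose proof (Hd x (or_introl eq_refl)).
  rewrite lprod_linear_part_cons by auto.
  change (length (x :: l)) with (S (length l)). rewrite S_INR, <- (tech_pow_Rmult (K + 1)). simpl lprod.
  set (P := lprod l (fun j => t j + d j)) in *. set (Q := lprod l t) in *.
  set (S := lprod_linear_part l t d) in *.
  set (m := INR (length l)) in *. set (B := (K + 1) ^ length l) in *.
  assert (0 <= m) by apply pos_INR. assert (0 <= B) by (apply pow_le; lra).
  clearbody P Q S m B.
  replace ((t x + d x) * P - t x * Q - (d x * Q + t x * S))
    with (t x * (P - Q - S) + d x * (P - Q)) by ring.
  eapply Rle_trans. apply Rabs_triang. rewrite !Rabs_mult.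
  assert (Rabs (t x) * Rabs (P - Q - S) <= K * (e ^ 2 * m ^ 2 * B))
    by (apply Rmult_le_compat; auto using Rabs_pos).
  assert (Rabs (d x) * Rabs (P - Q) <= e * (e * m * B))
    by (apply Rmult_le_compat; auto using Rabs_pos).
  assert (0 <= e ^ 2 * B * (m ^ 2 + m + 1 + K * (2 * m + 1)))
    by (apply Rmult_le_pos; [apply Rmult_le_pos; [apply pow2_ge_0 | lra] | nra]).
  assert (e ^ 2 * (m + 1) ^ 2 * ((K + 1) * B) - (K * (e ^ 2 * m ^ 2 * B) + e * (e * m * B))
          = e ^ 2 * B * (m ^ 2 + m + 1 + K * (2 * m + 1))) by ring.
  lra.
Qed.

End Perturbation.
End SiteProducts.

Definition site_entries (G : TN) (F : nat -> tensor) (a : list nat) (j : nat) : R :=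
  F j (restrict (incident G j) a).

Definition contraction_term (G : TN) (F : nat -> tensor) (a : list nat) : R :=
  lprod (seq 0 (nsites G)) (site_entries G F a).

Lemma contract_as_terms G F b : contract G F b =
  lsum (edge_indices G) (fun a =>
    if list_eq_dec Nat.eq_dec (restrict (open_legs G) a) b then contraction_term G F a else 0).
Proof. reflexivity. Qed.

Definition site_cofactor (G : TN) (Ts : nat -> tensor) (i : nat) (a : list nat) : R :=
  lprod (seq 0 (nsites G)) (fun j => if Nat.eqb j i then 1 else site_entries G Ts a j).

Lemma contraction_term_subst_site G Ts i X a : (i < nsites G)%nat ->
  contraction_term G (subst_site Ts i X) a = X (restrict (incident G i) a) * site_cofactor G Ts i a.
Proof.
  intros Hi. unfold contraction_term, site_cofactor. rewrite <- lprod_update.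
  - apply lprod_ext. intros j _. unfold site_entries, subst_site.
    destruct (Nat.eqb_spec j i); subst; auto.
  - apply seq_NoDup.
  - apply in_seq; lia.
Qed.

Lemma contract_subst_site G Ts i X b : (i < nsites G)%nat ->
  contract G (subst_site Ts i X) b = mx_apply (all_idx (shape G i)) (env_matrix G Ts i) X b.
Proof.
  intros Hi. unfold mx_apply, env_matrix. symmetry.
  rewrite (lsum_ext _ _ (fun c => lsum (edge_indices G) (fun a =>
     (if list_eq_dec Nat.eq_dec (restrict (open_legs G) a) b then
        unit_tensor c (restrict (incident G i) a) * site_cofactor G Ts i a else 0) * X c))).
  2:{ intros c _. rewrite contract_as_terms, Rmult_comm, <- lsum_scal. apply lsum_ext.
      intros a _. rewrite contraction_term_subst_site by auto. destruct (list_eq_dec _ _ _); ring. }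
  rewrite lsum_comm, contract_as_terms. apply lsum_ext. intros a Ha.
  destruct (list_eq_dec Nat.eq_dec (restrict (open_legs G) a) b).
  2:{ rewrite (lsum_ext _ _ (fun _ => 0)) by (intros; ring). apply lsum_0. }
  rewrite contraction_term_subst_site by auto.
  rewrite (lsum_single _ _ (restrict (incident G i) a)).
  - unfold unit_tensor. destruct (list_eq_dec Nat.eq_dec _ _); [ring | tauto].
  - apply NoDup_all_idx.
  - apply restrict_incident_in; auto.
  - intros c _ Hc. unfold unit_tensor. destruct (list_eq_dec Nat.eq_dec _ _); [subst; tauto | ring].
Qed.

Definition contraction_remainder G Ts (delta : nat -> tensor) : tensor := fun b =>
  lsum (edge_indices G) (fun a =>
    if list_eq_dec Nat.eq_dec (restrict (open_legs G) a) b then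
      contraction_term G (fun i y => Ts i y + delta i y) a - contraction_term G Ts a -
      lprod_linear_part (seq 0 (nsites G)) (site_entries G Ts a) (site_entries G delta a)
    else 0).

Lemma contract_perturb_expansion G Ts delta b :
  contract G (fun i y => Ts i y + delta i y) b - contract G Ts b =
  lsum (seq 0 (nsites G)) (fun i => mx_apply (all_idx (shape G i)) (env_matrix G Ts i) (delta i) b)
  + contraction_remainder G Ts delta b.
Proof.
  rewrite (lsum_ext _ _ (fun i => lsum (edge_indices G) (fun a =>
     if list_eq_dec Nat.eq_dec (restrict (open_legs G) a) b then
       lprod (seq 0 (nsites G)) (fun j => if Nat.eqb j i then site_entries G delta a j
                                          else site_entries G Ts a j)
     else 0))).
  2:{ intros i Hi. apply in_seq in Hi. rewrite <- contract_subst_site by lia.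
      apply lsum_ext. intros a _. destruct (list_eq_dec _ _ _); auto.
      apply lprod_ext. intros j _. unfold site_entries, subst_site.
      destruct (Nat.eqb_spec j i); subst; auto. }
  rewrite lsum_comm. unfold contraction_remainder, lprod_linear_part.
  rewrite !contract_as_terms, <- lsum_sub, <- lsum_add.
  apply lsum_ext. intros a _. destruct (list_eq_dec _ _ _); [ring | rewrite lsum_0; ring].
Qed.

Lemma sum_site_norms_ge0 G F : 0 <= sum_site_norms G F.
Proof. apply lsum_ge0. intros; apply sqrt_pos. Qed.

Lemma Rabs_site_entries_le G F a j : (j < nsites G)%nat -> In a (edge_indices G) ->
  Rabs (site_entries G F a j) <= sum_site_norms G F.
Proof.
  intros Hj Ha. eapply Rle_trans.
  - apply (Rabs_le_l2norm (all_idx (shape G j)) (F j)), restrict_incident_in, Ha.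
  - apply (lsum_ge_term _ (fun i => frob (shape G i) (F i))).
    + intros; apply sqrt_pos.
    + apply in_seq; lia.
Qed.

Definition remainder_const G Ts : R :=
  INR (length (all_idx (out_shape G))) * INR (length (edge_indices G)) *
  (INR (nsites G) ^ 2 * (sum_site_norms G Ts + 1) ^ nsites G).

Lemma remainder_const_ge0 G Ts : 0 <= remainder_const G Ts.
Proof.
  unfold remainder_const. pose proof (sum_site_norms_ge0 G Ts).
  pose proof (pow_le _ 2 (pos_INR (nsites G))).
  pose proof (pow_le (sum_site_norms G Ts + 1) (nsites G) ltac:(lra)).
  pose proof (pos_INR (length (all_idx (out_shape G)))). pose proof (pos_INR (length (edge_indices G))).
  apply Rmult_le_pos; apply Rmult_le_pos; auto.
Qed.

Lemma contraction_remainder_le G Ts delta e : 0 <= e <= 1 -> sum_site_norms G delta <= e ->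
  l2norm (all_idx (out_shape G)) (contraction_remainder G Ts delta) <= remainder_const G Ts * e ^ 2.
Proof.
  intros He Hd.
  set (N := INR (nsites G) ^ 2 * (sum_site_norms G Ts + 1) ^ nsites G).
  assert (HN : 0 <= e ^ 2 * N).
  { pose proof (sum_site_norms_ge0 G Ts).
    pose proof (pow_le _ 2 (pos_INR (nsites G))).
    pose proof (pow_le (sum_site_norms G Ts + 1) (nsites G) ltac:(lra)).
    apply Rmult_le_pos; [apply pow2_ge_0 | apply Rmult_le_pos; auto]. }
  eapply Rle_trans. apply l2norm_le_l1.
  replace (remainder_const G Ts * e ^ 2)
    with (INR (length (all_idx (out_shape G))) * (INR (length (edge_indices G)) * (e ^ 2 * N)))
    by (unfold remainder_const, N; ring).
  eapply Rle_trans. apply RRle_abs. apply Rabs_lsum_le_length. intros b _. rewrite Rabs_Rabsolu.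
  apply Rabs_lsum_le_length. intros a Ha. destruct (list_eq_dec _ _ _).
  2:{ rewrite Rabs_R0. exact HN. }
  unfold contraction_term. eapply Rle_trans.
  - apply (lprod_perturb_linear_le _ _ (sum_site_norms G Ts) e);
      auto using seq_NoDup, sum_site_norms_ge0.
    + intros j Hj. apply in_seq in Hj. apply Rabs_site_entries_le; auto; lia.
    + intros j Hj. apply in_seq in Hj. eapply Rle_trans; [apply Rabs_site_entries_le; auto; lia | auto].
  - rewrite length_seq. right. unfold N. ring.
Qed.

Lemma abs_err_le G Ts delta e : 0 <= e <= 1 -> sum_site_norms G delta <= e ->
  abs_err G Ts delta <= max_env_norm G Ts * e + remainder_const G Ts * e ^ 2.
Proof.
  intros He Hd. unfold abs_err, frob. fold (l2norm (all_idx (out_shape G))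
     (fun b => contract G (fun i x => Ts i x + delta i x) b - contract G Ts b)).
  rewrite (l2norm_ext _ _ (fun b =>
    lsum (seq 0 (nsites G)) (fun i => mx_apply (all_idx (shape G i)) (env_matrix G Ts i) (delta i) b)
    + contraction_remainder G Ts delta b)) by (intros; apply contract_perturb_expansion).
  eapply Rle_trans. apply l2norm_add_le.
  apply Rplus_le_compat; [|apply contraction_remainder_le; auto].
  eapply Rle_trans. apply l2norm_lsum_le.
  apply Rle_trans with
    (lsum (seq 0 (nsites G)) (fun i => max_env_norm G Ts * frob (shape G i) (delta i))).
  - apply lsum_le. intros i Hi. eapply Rle_trans. apply spec_norm_mul_le.
    apply Rmult_le_compat_r. apply sqrt_pos.
    apply (le_fold_Rmax _ (env_norm G Ts)); auto.
  - rewrite lsum_scal. apply Rmult_le_compat_l; [apply fold_Rmax_ge0 | exact Hd].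
Qed.

Lemma sum_site_norms_single G i X : (i < nsites G)%nat ->
  sum_site_norms G (subst_site (fun _ _ => 0) i X) = frob (shape G i) X.
Proof.
  intros Hi. unfold sum_site_norms. rewrite (lsum_single _ _ i).
  - unfold subst_site. rewrite Nat.eqb_refl. reflexivity.
  - apply seq_NoDup.
  - apply in_seq; lia.
  - intros j _ Hj. unfold subst_site. rewrite (proj2 (Nat.eqb_neq j i) Hj).
    apply (l2norm_0 (all_idx (shape G j))).
Qed.

Lemma abs_err_single G Ts i X : (i < nsites G)%nat ->
  abs_err G Ts (subst_site (fun _ _ => 0) i X) =
  l2norm (all_idx (out_shape G)) (mx_apply (all_idx (shape G i)) (env_matrix G Ts i) X).
Proof.
  intros Hi.
  assert (Hsub : (fun j y => Ts j y + subst_site (fun _ _ => 0) i X j y)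
                 = subst_site Ts i (fun y => Ts i y + X y)).
  { extensionality j. extensionality y. unfold subst_site.
    destruct (Nat.eqb_spec j i); subst; ring. }
  assert (Hself : subst_site Ts i (Ts i) = Ts).
  { extensionality j. unfold subst_site. destruct (Nat.eqb_spec j i); subst; auto. }
  unfold abs_err. rewrite Hsub. apply l2norm_ext. intros b _.
  rewrite <- Hself at 2. rewrite !contract_subst_site by auto.
  unfold mx_apply. rewrite <- lsum_sub. apply lsum_ext. intros; ring.
Qed.

Definition ratio_values G Ts eps r : Prop :=
  exists delta : nat -> tensor, sum_site_norms G delta <= eps /\ r = abs_err G Ts delta / eps.

Lemma sup_ratio_bounds G Ts eps : 0 < eps <= 1 ->
  max_env_norm G Ts <= sup_ratio G Ts eps <= max_env_norm G Ts + remainder_const G Ts * eps.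
Proof.
  intros He.
  assert (Hub : forall r, ratio_values G Ts eps r -> r <= max_env_norm G Ts + remainder_const G Ts * eps).
  { intros r [d [Hd ->]]. pose proof (abs_err_le G Ts d eps ltac:(lra) Hd).
    apply Rmult_le_reg_r with eps. lra. unfold Rdiv. rewrite Rmult_assoc, Rinv_l by lra. nra. }
  assert (Hlub : is_lub (ratio_values G Ts eps) (sup_ratio G Ts eps)).
  { apply Rsup_is_lub. exists (max_env_norm G Ts + remainder_const G Ts * eps); exact Hub.
    exists (abs_err G Ts (fun _ _ => 0) / eps), (fun _ _ => 0). split; auto.
    unfold sum_site_norms. rewrite (lsum_ext _ _ (fun _ => 0)), lsum_0. lra.
    intros j _. apply (l2norm_0 (all_idx (shape G j))). }
  split; [|apply (proj2 Hlub); exact Hub].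
  apply fold_Rmax_le.
  -     eapply Rle_trans; [|apply (proj1 Hlub); exists (fun _ _ => 0); split; [|reflexivity]].
    + apply Rmult_le_pos. apply sqrt_pos. left; apply Rinv_0_lt_compat; lra.
    + unfold sum_site_norms. rewrite (lsum_ext _ _ (fun _ => 0)), lsum_0. lra.
      intros j _. apply (l2norm_0 (all_idx (shape G j))).
  - intros i Hi. apply in_seq in Hi. apply (proj2 (spec_norm_is_lub _ _ _)).
    intros r [x [Hx ->]]. apply (proj1 Hlub).
    exists (subst_site (fun _ _ => 0) i (fun y => eps * x y)).
    rewrite sum_site_norms_single, abs_err_single by lia. unfold frob.
    fold (l2norm (all_idx (shape G i)) (fun y => eps * x y)).
    rewrite l2norm_scal, Rabs_right by lra. split; [nra|].
    rewrite (l2norm_ext _ (mx_apply (all_idx (shape G i)) (env_matrix G Ts i) (fun y => eps * x y))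
                          (fun b => eps * mx_apply (all_idx (shape G i)) (env_matrix G Ts i) x b)).
    + rewrite l2norm_scal, Rabs_right by lra. field. lra.
    + intros b _. unfold mx_apply. rewrite <- lsum_scal. apply lsum_ext. intros; ring.
Qed.

Lemma limit1_in_squeeze_0 (f : R -> R) L C : 0 <= C ->
  (forall e, 0 < e <= 1 -> L <= f e <= L + C * e) ->
  limit1_in f (fun e => 0 < e) L 0.
Proof.
  intros HC Hf eps Heps. exists (Rmin 1 (eps / (C + 1))). split.
  - apply Rmin_glb_lt; [lra | apply Rdiv_lt_0_compat; lra].
  - intros x [Hx Hd]. simpl in *. unfold Rdist in *. rewrite Rminus_0_r, Rabs_right in Hd by lra.
    pose proof (Rmin_l 1 (eps / (C + 1))). pose proof (Rmin_r 1 (eps / (C + 1))).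
    destruct (Hf x ltac:(lra)). rewrite Rabs_right by lra.
    assert (x * (C + 1) < eps).
    { apply Rmult_lt_reg_r with (/ (C + 1)). apply Rinv_0_lt_compat; lra.
      rewrite Rmult_assoc, Rinv_r by lra. unfold Rdiv in *. lra. }
    nra.
Qed.

Lemma kappa_a_unique G Ts k : is_kappa_a G Ts k -> kappa_a G Ts = k.
Proof.
  intros Hk. unfold kappa_a. apply (single_limit (sup_ratio G Ts) (fun eps => 0 < eps)) with 0; auto.
  - intros alp Halp. exists (alp / 2). split; [lra|]. simpl. unfold Rdist.
    rewrite Rminus_0_r, Rabs_right; lra.
  - apply epsilon_spec. eauto.
Qed.

Theorem mainTheorem2 (G : TN) (Ts : nat -> tensor) :
  well_formed G ->
  frob (out_shape G) (contract G Ts) <> 0 ->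
  is_kappa_a G Ts (max_env_norm G Ts) /\
  kappa_a G Ts = max_env_norm G Ts /\
  kappa_r G Ts =
    sum_site_norms G Ts / frob (out_shape G) (contract G Ts) * max_env_norm G Ts.
Proof.
  intros _ _.
  assert (Hk : is_kappa_a G Ts (max_env_norm G Ts))
    by exact (limit1_in_squeeze_0 _ _ _ (remainder_const_ge0 G Ts) (sup_ratio_bounds G Ts)).
  pose proof (kappa_a_unique G Ts _ Hk) as Hka.
  split; [exact Hk|]. split; [exact Hka|].
  unfold kappa_r. rewrite Hka. reflexivity.
Qed.
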